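(* Consider the model without monotonicity, parametrized by $\boldsymbol{\xi}=(\boldsymbol{p},\boldsymbol{\alpha},\boldsymbol{\pi},\boldsymbol{\delta})$ ranging over the open set $\Xi$ where $\boldsymbol{p}=(p_1,\dots,p_{N_R})$ lies in the open probability simplex, $\alpha_r\in(0,1)$ for each $r$, $\boldsymbol{\pi}_r=(\pi_{ss,r},\pi_{s\bar{s},r},\pi_{\bar{s}\bar{s},r},\pi_{\bar{s}s,r})$ lies in the open probability simplex for each $r$, and $\delta_{zu}\in(0,1)$ for $z\in\{0,1\}$, $u\in\{ss,s\bar{s},\bar{s}\bar{s},\bar{s}s\}$ (so $\Xi$ has dimension $5N_R+7$). Let $f:\Xi\to\mathbb{R}^{8N_R}$ map $\boldsymbol{\xi}$ to the observed cell probabilities $$P(R=r,Z=z,S=s,Y=y)=p_r\,\alpha_r^{z}(1-\alpha_r)^{1-z}\sum_{u\in O(z,s)}\pi_{ur}\,\delta_{zu}^{y}(1-\delta_{zu})^{1-y},$$ for $r\in\{1,\dots,N_R\}$, $z,s,y\in\{0,1\}$. If $N_R\le 2$, then $\boldsymbol{\xi}$ is not locally identifiable at any $\boldsymbol{\xi}_0\in\Xi$: every neighborhood of $\boldsymbol{\xi}_0$ contains some $\boldsymbol{\xi}\neq\boldsymbol{\xi}_0$ with $f(\boldsymbol{\xi})=f(\boldsymbol{\xi}_0)$. Consequently $N_R\ge 3$ is necessary for local identifiability.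
   Context: This parametrization is the joint distribution of $(R,Z,U,Y)$ implied by Assumption 1 (randomization: $Z\perp\!\!\!\perp\{S(1),S(0),Y(1),Y(0)\}\mid R$) and Assumption 3 (homogeneity: $R\perp\!\!\!\perp Y(z)\mid U$), with $p_r=P(R=r)$, $\alpha_r=P(Z=1\mid R=r)$, $\pi_{ur}=P(U=u\mid R=r)$, $\delta_{zu}=P(Y=1\mid Z=z,U=u)$. Here $U=(S(1),S(0))$ with values $(1,1),(1,0),(0,1),(0,0)$ labeled $ss,s\bar{s},\bar{s}s,\bar{s}\bar{s}$, and $S=S(Z)$. $O(z,s)$ is the set of strata compatible with observing $Z=z,S=s$: $O(1,1)=\{ss,s\bar{s}\}$, $O(1,0)=\{\bar{s}\bar{s},\bar{s}s\}$, $O(0,1)=\{ss,\bar{s}s\}$, $O(0,0)=\{s\bar{s},\bar{s}\bar{s}\}$. The observed cell probabilities sum to one, so they lie in an affine space of dimension $8N_R-1$. *)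

From Stdlib Require Import Reals List.
Open Scope R_scope.

(* Principal strata U = (S(1),S(0)): ss, s sbar, sbar sbar, sbar s. *)
Inductive stratum : Type := u_ss | u_ssb | u_sbsb | u_sbs.

Definition all_strata : list stratum := u_ss :: u_ssb :: u_sbsb :: u_sbs :: nil.

Definition Obs (z s : bool) : list stratum :=
  match z, s with
  | true, true => u_ss :: u_ssb :: nil
  | true, false => u_sbsb :: u_sbs :: nil
  | false, true => u_ss :: u_sbs :: nil
  | false, false => u_ssb :: u_sbsb :: nil
  end.

Definition bern (a : R) (x : bool) : R := a ^ (Nat.b2n x) * (1 - a) ^ (1 - Nat.b2n x).

Fixpoint sumN (f : nat -> R) (n : nat) : R :=
  match n with O => 0 | S k => sumN f k + f k end.

Definition sumL (f : stratum -> R) (l : list stratum) : R :=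
  fold_right (fun u acc => f u + acc) 0 l.

(* Parameter xi = (p, alpha, pi, delta); strata indices r = 0..NR-1. *)
Record param : Type := mkParam {
  pp : nat -> R;
  alpha : nat -> R;                 (* alpha_r = P(Z=1|R=r) *)
  ppi : nat -> stratum -> R;        (* pi_{u r} = P(U=u|R=r) *)
  delta : bool -> stratum -> R      (* delta_{z u} = P(Y=1|Z=z,U=u) *)
}.

Definition in_Xi (NR : nat) (x : param) : Prop :=
  (forall r, (r < NR)%nat -> 0 < pp x r) /\ sumN (pp x) NR = 1 /\
  (forall r, (r < NR)%nat -> 0 < alpha x r < 1) /\
  (forall r, (r < NR)%nat ->
     (forall u, 0 < ppi x r u) /\ sumL (ppi x r) all_strata = 1) /\
  (forall z u, 0 < delta x z u < 1).

Definition cell (x : param) (r : nat) (z s y : bool) : R :=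
  pp x r * bern (alpha x r) z *
  sumL (fun u => ppi x r u * bern (delta x z u) y) (Obs z s).

Definition same_obs (NR : nat) (x x0 : param) : Prop :=
  forall r z s y, (r < NR)%nat -> cell x r z s y = cell x0 r z s y.

Definition close (NR : nat) (eps : R) (x x0 : param) : Prop :=
  (forall r, (r < NR)%nat ->
     Rabs (pp x r - pp x0 r) < eps /\ Rabs (alpha x r - alpha x0 r) < eps /\
     (forall u, Rabs (ppi x r u - ppi x0 r u) < eps)) /\
  (forall z u, Rabs (delta x z u - delta x0 z u) < eps).

(* x and x0 are equal as points of Xi (only indices r < NR are meaningful). *)
Definition param_eq (NR : nat) (x x0 : param) : Prop :=
  (forall r, (r < NR)%nat ->
     pp x r = pp x0 r /\ alpha x r = alpha x0 r /\ (forall u, ppi x r u = ppi x0 r u)) /\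
  (forall z u, delta x z u = delta x0 z u).

From Stdlib Require Import Reals List Lra Lia Classical.
Open Scope R_scope.

(* In every observed cell (z,s) two principal strata are pooled, so the data only
   see, per R-stratum r and pair, the pooled mass and the pooled mass of Y = 1.
   If some pair has proportional weights across the R-strata, its two deltas can be
   moved in opposite directions without changing these pooled quantities; this always
   happens when N_R = 1.  Otherwise N_R = 2 and every pair has a nonzero 2x2
   determinant: tilting pi_{.,1} by +-t (opposite signs within each pair, so pooled
   masses are unchanged) and solving each pair's 2x2 linear system for the new deltas
   by Cramer's rule gives, for small t, a distinct point of Xi in the same fibre. *)

Scheme Equality for stratum.

Definition partner (z : bool) (u : stratum) : stratum :=
  if z then match u with u_ss => u_ssb | u_ssb => u_ss | u_sbsb => u_sbs | u_sbs => u_sbsb end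
  else match u with u_ss => u_sbs | u_sbs => u_ss | u_ssb => u_sbsb | u_sbsb => u_ssb end.

Definition cell_head (z s : bool) : stratum :=
  match z, s with
  | true, true => u_ss | true, false => u_sbsb
  | false, true => u_ss | false, false => u_ssb
  end.

Lemma Obs_pair z s : Obs z s = cell_head z s :: partner z (cell_head z s) :: nil.
Proof. now destruct z, s. Qed.

Lemma partner_involutive z u : partner z (partner z u) = u.
Proof. now destruct z, u. Qed.

Definition sg (u : stratum) : R :=
  match u with u_ss => 1 | u_ssb => -1 | u_sbsb => 1 | u_sbs => -1 end.

Lemma sg_partner z u : sg (partner z u) = - sg u.
Proof. destruct z, u; simpl; ring. Qed.

Lemma Rabs_sg u : Rabs (sg u) = 1.
Proof. destruct u; simpl; unfold Rabs; destruct Rcase_abs; lra. Qed.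

Lemma sumL_all_strata (f : stratum -> R) :
  sumL f all_strata = f u_ss + f u_ssb + f u_sbsb + f u_sbs.
Proof. unfold sumL; simpl; ring. Qed.

Lemma bern_true a : bern a true = a.
Proof. unfold bern; simpl; ring. Qed.

Lemma bern_false a : bern a false = 1 - a.
Proof. unfold bern; simpl; ring. Qed.

Lemma cell_pair x r z s y (u := cell_head z s) :
  cell x r z s y = pp x r * bern (alpha x r) z *
    (ppi x r u * bern (delta x z u) y +
     ppi x r (partner z u) * bern (delta x z (partner z u)) y).
Proof. unfold cell; rewrite Obs_pair; unfold sumL, u; simpl; ring. Qed.

Lemma same_obs_of_pairs NR x x0 :
  pp x = pp x0 -> alpha x = alpha x0 ->
  (forall r z u, (r < NR)%nat ->
     ppi x r u + ppi x r (partner z u) = ppi x0 r u + ppi x0 r (partner z u) /\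
     ppi x r u * delta x z u + ppi x r (partner z u) * delta x z (partner z u) =
     ppi x0 r u * delta x0 z u + ppi x0 r (partner z u) * delta x0 z (partner z u)) ->
  same_obs NR x x0.
Proof.
  intros hp ha hpairs r z s y hr.
  rewrite !cell_pair, hp, ha.
  destruct (hpairs r z (cell_head z s) hr) as [hmass hyes].
  apply f_equal; destruct y; rewrite ?bern_true, ?bern_false; lra.
Qed.

Lemma Rabs_le_between x c : Rabs x <= c -> - c <= x <= c.
Proof. pose proof (Rle_abs x); pose proof (Rle_abs (- x)); rewrite Rabs_Ropp in *; lra. Qed.

Lemma simplex_le_1 (f : stratum -> R) u :
  (forall v, 0 < f v) -> sumL f all_strata = 1 -> f u <= 1.
Proof.
  rewrite sumL_all_strata; intros hpos hsum.
  pose proof (hpos u_ss); pose proof (hpos u_ssb);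
  pose proof (hpos u_sbsb); pose proof (hpos u_sbs).
  destruct u; lra.
Qed.

Lemma stratum_lower_bound (f : bool -> stratum -> R) :
  (forall z u, 0 < f z u) -> exists m, 0 < m /\ forall z u, m <= f z u.
Proof.
  intros hpos.
  set (g u := Rmin (f true u) (f false u)).
  exists (Rmin (Rmin (g u_ss) (g u_ssb)) (Rmin (g u_sbsb) (g u_sbs))).
  assert (hg : forall u, 0 < g u) by (intro u; apply Rmin_glb_lt; apply hpos).
  split.
  - apply Rmin_glb_lt; apply Rmin_glb_lt; apply hg.
  - assert (hgf : forall z u, g u <= f z u)
      by (intros [|] u; [apply Rmin_l | apply Rmin_r]).
    intros z u; eapply Rle_trans; [|apply hgf].
    destruct u; unfold Rmin at 1 2 3; repeat destruct Rle_dec; lra.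
Qed.

Lemma in_Xi_margin NR x eps : in_Xi NR x -> (0 < NR)%nat -> 0 < eps ->
  exists m, 0 < m /\ m <= eps /\
    forall z u, m <= delta x z u /\ m <= 1 - delta x z u /\ m <= ppi x 0 u.
Proof.
  intros (_ & _ & _ & hpi & hd) hNR he.
  destruct (hpi 0%nat hNR) as [hpos _].
  destruct (stratum_lower_bound
              (fun z u => Rmin (Rmin (delta x z u) (1 - delta x z u)) (ppi x 0 u)))
    as [m [hm hle]].
  { intros z u; specialize (hd z u); repeat apply Rmin_glb_lt; auto; lra. }
  exists (Rmin eps m); split; [now apply Rmin_glb_lt|]; split; [apply Rmin_l|].
  intros z u; specialize (hle z u).
  unfold Rmin in *; repeat destruct Rle_dec; lra.
Qed.

Definition equivalent_point_within NR eps x0 : Prop :=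
  exists x : param, in_Xi NR x /\ close NR eps x x0 /\ ~ param_eq NR x x0 /\
    same_obs NR x x0.

Definition pair_shift (z : bool) (u : stratum) (a b : R) (z' : bool) (v : stratum) : R :=
  if Bool.eqb z' z then
    if stratum_eq_dec v u then a else if stratum_eq_dec v (partner z u) then - b else 0
  else 0.

Lemma Rabs_pair_shift_le z u a b c z' v :
  0 <= a <= c -> 0 <= b <= c -> Rabs (pair_shift z u a b z' v) <= c.
Proof.
  intros ha hb; apply Rabs_le; unfold pair_shift.
  destruct (Bool.eqb z' z), (stratum_eq_dec v u), (stratum_eq_dec v (partner z u)); lra.
Qed.

Lemma pair_shift_null (pi : nat -> stratum -> R) z u k r z' v :
  pi r u * pi 0%nat (partner z u) = pi r (partner z u) * pi 0%nat u ->
  pi r v * pair_shift z u (k * pi 0%nat (partner z u)) (k * pi 0%nat u) z' v +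
  pi r (partner z' v) *
    pair_shift z u (k * pi 0%nat (partner z u)) (k * pi 0%nat u) z' (partner z' v) = 0.
Proof.
  intros hprop; apply (Rmult_eq_compat_l k) in hprop; unfold pair_shift.
  destruct z, u, z', v; simpl in *; lra.
Qed.

Lemma proportional_pair_equivalent NR x0 eps z u :
  in_Xi NR x0 -> (0 < NR)%nat -> 0 < eps ->
  (forall r, (r < NR)%nat ->
     ppi x0 r u * ppi x0 0 (partner z u) = ppi x0 r (partner z u) * ppi x0 0 u) ->
  equivalent_point_within NR eps x0.
Proof.
  intros hx hNR he hprop.
  destruct (in_Xi_margin NR x0 eps hx hNR he) as (m & hm & hme & hmd).
  pose proof hx as (hp & hs & ha & hpi & hd).
  destruct (hpi 0%nat hNR) as [hpos hsum].
  set (w := pair_shift z u (m / 2 * ppi x0 0 (partner z u)) (m / 2 * ppi x0 0 u)).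
  assert (hw : forall z' v, Rabs (w z' v) <= m / 2).
  { intros z' v; apply Rabs_pair_shift_le;
      pose proof (hpos u); pose proof (hpos (partner z u));
      pose proof (simplex_le_1 _ u hpos hsum);
      pose proof (simplex_le_1 _ (partner z u) hpos hsum); split; nra. }
  exists (mkParam (pp x0) (alpha x0) (ppi x0) (fun z' v => delta x0 z' v + w z' v)).
  split; [|split; [|split]].
  - refine (conj hp (conj hs (conj ha (conj hpi _)))); simpl; intros z' v;
      destruct (hmd z' v) as (h1 & h2 & _); pose proof (Rabs_le_between _ _ (hw z' v)); lra.
  - split; simpl.
    + intros r _; rewrite !Rminus_diag, Rabs_R0; repeat split; auto.
      intro v; rewrite Rminus_diag, Rabs_R0; exact he.
    + intros z' v; replace (delta x0 z' v + w z' v - delta x0 z' v) with (w z' v) by ring.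
      specialize (hw z' v); lra.
  - intros [_ hdelta]; specialize (hdelta z u); simpl in hdelta.
    unfold w, pair_shift in hdelta; rewrite Bool.eqb_reflx in hdelta.
    destruct (stratum_eq_dec u u) as [_|]; [|easy].
    pose proof (hpos (partner z u)); nra.
  - apply same_obs_of_pairs; auto; intros r z' v hr; simpl; split; [ring|].
    pose proof (pair_shift_null (ppi x0) z u (m / 2) r z' v (hprop r hr)) as hnull.
    fold w in hnull; lra.
Qed.

Definition pair_det (pi : nat -> stratum -> R) (z : bool) (u : stratum) : R :=
  pi 0%nat u * pi 1%nat (partner z u) - pi 0%nat (partner z u) * pi 1%nat u.

Lemma pair_det_partner pi z u : pair_det pi z (partner z u) = - pair_det pi z u.
Proof. unfold pair_det; rewrite partner_involutive; ring. Qed.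

(* [sg] has opposite signs on partners and sums to 0, so tilting keeps [pi 0] in the
   simplex and preserves every pooled mass. *)
Definition tilt (pi : nat -> stratum -> R) (t : R) (r : nat) (v : stratum) : R :=
  match r with O => pi 0%nat v + sg v * t | _ => pi r v end.

Lemma pair_det_tilt pi t z u :
  pair_det (tilt pi t) z u =
  pair_det pi z u + sg u * t * (pi 1%nat u + pi 1%nat (partner z u)).
Proof. unfold pair_det, tilt; rewrite sg_partner; ring. Qed.

Lemma pair_det_tilt_lower pi t K z u :
  0 <= t -> 4 * t <= K -> K <= Rabs (pair_det pi z u) ->
  (forall v, 0 <= pi 1%nat v <= 1) -> K / 2 <= Rabs (pair_det (tilt pi t) z u).
Proof.
  intros ht htK hK hpi1; rewrite pair_det_tilt.
  set (e := sg u * t * (pi 1%nat u + pi 1%nat (partner z u))).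
  assert (he : Rabs e <= 2 * t).
  { unfold e; rewrite !Rabs_mult, Rabs_sg, (Rabs_pos_eq t), Rabs_pos_eq by
      (auto; pose proof (hpi1 u); pose proof (hpi1 (partner z u)); lra).
    pose proof (hpi1 u); pose proof (hpi1 (partner z u)); nra. }
  pose proof (Rabs_triang_inv (pair_det pi z u) (- e)) as htri.
  rewrite Rabs_Ropp in htri; replace (pair_det pi z u - - e) with (pair_det pi z u + e)
    in htri by ring; lra.
Qed.

(* The new deltas of pair (z,u) are delta - c (pi_1 p, - pi_1 u), p the partner of u:
   this solves the r = 1 equation for every c, and Cramer's rule gives the c solving
   the r = 0 equation with the tilted weights. *)
Definition cramer_coef (x : param) (t : R) (z : bool) (u : stratum) : R :=
  sg u * t * (delta x z u - delta x z (partner z u)) / pair_det (tilt (ppi x) t) z u.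

Definition cramer_point (x : param) (t : R) : param :=
  mkParam (pp x) (alpha x) (tilt (ppi x) t)
    (fun z v => delta x z v - cramer_coef x t z v * ppi x 1 (partner z v)).

Lemma cramer_coef_partner x t z u :
  cramer_coef x t z (partner z u) = - cramer_coef x t z u.
Proof.
  unfold cramer_coef, Rdiv.
  rewrite partner_involutive, sg_partner, pair_det_partner, Rinv_opp; ring.
Qed.

Lemma cramer_point_pairs x t r z u : (r < 2)%nat ->
  pair_det (tilt (ppi x) t) z u <> 0 ->
  let x' := cramer_point x t in
  ppi x' r u + ppi x' r (partner z u) = ppi x r u + ppi x r (partner z u) /\
  ppi x' r u * delta x' z u + ppi x' r (partner z u) * delta x' z (partner z u) =
  ppi x r u * delta x z u + ppi x r (partner z u) * delta x z (partner z u).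
Proof.
  intros hr hdet; simpl; rewrite cramer_coef_partner, partner_involutive.
  set (c := cramer_coef x t z u).
  assert (hc : c * pair_det (tilt (ppi x) t) z u =
               sg u * t * (delta x z u - delta x z (partner z u)))
    by (unfold c, cramer_coef; field; exact hdet).
  unfold pair_det, tilt in hc |- *; rewrite sg_partner in hc |- *.
  destruct r as [|[|r]]; [split; lra | split; ring | lia].
Qed.

Lemma Rabs_cramer_shift_le x t K z v :
  0 <= t -> 0 < K -> 4 * t <= K -> K <= Rabs (pair_det (ppi x) z v) ->
  (forall w, 0 <= ppi x 1 w <= 1) -> (forall w, 0 < delta x z w < 1) ->
  Rabs (cramer_coef x t z v * ppi x 1 (partner z v)) <= 2 * t / K.
Proof.
  intros ht hK htK hKdet hpi1 hd.
  pose proof (pair_det_tilt_lower _ t K z v ht htK hKdet hpi1) as hdet.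
  assert (hdiff : Rabs (sg v * t * (delta x z v - delta x z (partner z v))) <= t).
  { rewrite !Rabs_mult, Rabs_sg, (Rabs_pos_eq t) by exact ht.
    assert (Rabs (delta x z v - delta x z (partner z v)) <= 1)
      by (apply Rabs_le; pose proof (hd v); pose proof (hd (partner z v)); lra).
    nra. }
  unfold cramer_coef, Rdiv; rewrite 2!Rabs_mult, Rabs_inv.
  rewrite (Rabs_pos_eq (ppi x 1 _)) by apply hpi1.
  apply Rle_trans with (t * / (K / 2) * 1); [|right; field; lra].
  apply Rmult_le_compat; try apply hpi1.
  - apply Rmult_le_pos; [apply Rabs_pos | left; apply Rinv_0_lt_compat; lra].
  - apply Rmult_le_compat; auto using Rabs_pos.
    + left; apply Rinv_0_lt_compat; lra.
    + apply Rinv_le_contravar; lra.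
Qed.

Lemma nondegenerate_pairs_equivalent x0 eps : in_Xi 2 x0 -> 0 < eps ->
  (forall z u, pair_det (ppi x0) z u <> 0) -> equivalent_point_within 2 eps x0.
Proof.
  intros hx he hdet.
  destruct (in_Xi_margin 2 x0 eps hx ltac:(lia) he) as (m & hm & hme & hmd).
  pose proof hx as (hp & hs & ha & hpi & hd).
  destruct (hpi 0%nat ltac:(lia)) as [hpos0 hsum0].
  destruct (hpi 1%nat ltac:(lia)) as [hpos1 hsum1].
  destruct (stratum_lower_bound (fun z u => Rmin 1 (Rabs (pair_det (ppi x0) z u))))
    as [K [hK hKmin]]; [intros z u; apply Rmin_glb_lt, Rabs_pos_lt, hdet; lra|].
  assert (hKdet : forall z u, K <= Rabs (pair_det (ppi x0) z u))
    by (intros z u; eapply Rle_trans; [apply hKmin | apply Rmin_r]).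
  assert (hK1 : K <= 1) by (eapply Rle_trans; [apply (hKmin true u_ss) | apply Rmin_l]).
  assert (hm1 : m <= 1)
    by (destruct (hmd true u_ss) as (? & ? & _); pose proof (hd true u_ss); lra).
  set (t := m * K / 4).
  assert (ht : 0 < t) by (unfold t; pose proof (Rmult_lt_0_compat m K hm hK); lra).
  assert (htK : 4 * t <= K) by (unfold t; nra).
  assert (htm : t < m) by (unfold t; nra).
  assert (hpi1 : forall v, 0 <= ppi x0 1 v <= 1)
    by (intro v; pose proof (hpos1 v); pose proof (simplex_le_1 _ v hpos1 hsum1); lra).
  assert (hshift : forall z v, Rabs (cramer_coef x0 t z v * ppi x0 1 (partner z v)) <= m / 2).
  { intros z v; replace (m / 2) with (2 * t / K) by (unfold t; field; lra).
    apply Rabs_cramer_shift_le; auto; lra. }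
  exists (cramer_point x0 t); split; [|split; [|split]].
  - refine (conj hp (conj hs (conj ha (conj _ _)))); simpl.
    + intros [|[|r]] hr; [| exact (hpi 1%nat hr) | lia].
      split; [intro v | rewrite !sumL_all_strata in *; simpl; lra].
      destruct (hmd true v) as (_ & _ & h); destruct v; simpl in *; lra.
    + intros z v; destruct (hmd z v) as (h1 & h2 & _).
      pose proof (Rabs_le_between _ _ (hshift z v)); lra.
  - split; simpl.
    + intros [|r] _; rewrite !Rminus_diag, Rabs_R0; repeat split; auto; intro v; simpl.
      * replace (ppi x0 0 v + sg v * t - ppi x0 0 v) with (sg v * t) by ring.
        rewrite Rabs_mult, Rabs_sg, Rabs_pos_eq; lra.
      * rewrite Rminus_diag, Rabs_R0; exact he.
    + intros z v; replace (delta x0 z v - cramer_coef x0 t z v * ppi x0 1 (partner z v)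
        - delta x0 z v) with (- (cramer_coef x0 t z v * ppi x0 1 (partner z v))) by ring.
      rewrite Rabs_Ropp; specialize (hshift z v); lra.
  - intros [hpi_eq _]; destruct (hpi_eq 0%nat ltac:(lia)) as (_ & _ & h).
    specialize (h u_ss); simpl in h; lra.
  - apply same_obs_of_pairs; auto; intros r z u hr.
    apply cramer_point_pairs; [exact hr | intro h0].
    pose proof (pair_det_tilt_lower _ t K z u ltac:(lra) htK (hKdet z u) hpi1) as hlow.
    rewrite h0, Rabs_R0 in hlow; lra.
Qed.

Theorem proposition2 (NR : nat) (hNR : (NR <= 2)%nat) (x0 : param) (hx0 : in_Xi NR x0) :
  forall eps : R, 0 < eps ->
  exists x : param, in_Xi NR x /\ close NR eps x x0 /\ ~ param_eq NR x x0 /\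
    same_obs NR x x0.
Proof.
  intros eps he.
  destruct NR as [|[|[|NR]]]; [| | | lia].
  - destruct hx0 as (_ & hs & _); simpl in hs; lra.
  - apply (proportional_pair_equivalent 1 x0 eps true u_ss); auto.
    intros r hr; replace r with 0%nat by lia; ring.
  - destruct (classic (forall z u, pair_det (ppi x0) z u <> 0)) as [hdet | hdeg].
    + exact (nondegenerate_pairs_equivalent x0 eps hx0 he hdet).
    + apply not_all_ex_not in hdeg as [z hdeg]; apply not_all_ex_not in hdeg as [u hdeg].
      apply NNPP in hdeg; unfold pair_det in hdeg.
      apply (proportional_pair_equivalent 2 x0 eps z u); auto.
      intros [|[|r]] hr; [ring | lra | lia].
Qed.
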